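(* (1) If $(\mathsf P,\mathcal O)$ is a semitopology that is Hausdorff and in which every point is quasiregular, then $\mathcal O=\mathcal P(\mathsf P)$. (2) There exists a semitopology that is $T_1$, in which every point is regular (hence quasiregular), and whose set of opens is not the full powerset.
   Context: A semitopology is a pair $(\mathsf P,\mathcal O)$ where $\mathsf P$ is a set and $\mathcal O\subseteq\mathcal P(\mathsf P)$ contains $\varnothing$ and $\mathsf P$ and is closed under arbitrary unions. It is Hausdorff when any two distinct points have disjoint open neighbourhoods, and $T_1$ when for distinct $p_1,p_2$ there are opens $O_1,O_2$ with $p_i\in O_j$ iff $i=j$. Points $p,p'$ are intertwined when every open set containing $p$ intersects every open set containing $p'$; $I(p)$ is the set of points intertwined with $p$; $K(p)=\mathrm{int}(I(p))$ where $\mathrm{int}(R)$ is the union of all open subsets of $R$. $p$ is quasiregular when $K(p)\neq\varnothing$. A set $T$ is topen when it is nonempty, open, and for all open $O,O'$ with $O\cap T\neq\varnothing\neq T\cap O'$ we have $O\cap O'\neq\varnothing$; $p$ is regular when $p\in K(p)$ and $K(p)$ is topen. *)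

Set Implicit Arguments.

Definition pset (P : Type) := P -> Prop.

Record semitopology (P : Type) := {
  opn : pset P -> Prop;
  opn_empty : opn (fun _ => False);
  opn_full : opn (fun _ => True);
  opn_union : forall (F : pset P -> Prop),
      (forall O, F O -> opn O) -> opn (fun x => exists O, F O /\ O x)
}.

Section Defs.
Variables (P : Type) (S : semitopology P).

Definition Hausdorff : Prop :=
  forall p1 p2 : P, p1 <> p2 ->
    exists O1 O2, opn S O1 /\ opn S O2 /\ O1 p1 /\ O2 p2 /\
      (forall x, ~ (O1 x /\ O2 x)).

Definition T1 : Prop :=
  forall p1 p2 : P, p1 <> p2 ->
    exists O1 O2, opn S O1 /\ opn S O2 /\
      O1 p1 /\ ~ O1 p2 /\ O2 p2 /\ ~ O2 p1.

Definition intertwined (p p' : P) : Prop :=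
  forall O O', opn S O -> opn S O' -> O p -> O' p' -> exists x, O x /\ O' x.

Definition Iset (p : P) : pset P := fun p' => intertwined p p'.

Definition interior (R : pset P) : pset P :=
  fun x => exists O, opn S O /\ (forall y, O y -> R y) /\ O x.

Definition Kset (p : P) : pset P := interior (Iset p).

Definition quasiregular (p : P) : Prop := exists x, Kset p x.

Definition topen (T : pset P) : Prop :=
  (exists x, T x) /\ opn S T /\
  forall O O', opn S O -> opn S O' ->
    (exists x, O x /\ T x) -> (exists x, T x /\ O' x) ->
    exists x, O x /\ O' x.

Definition regular (p : P) : Prop := Kset p p /\ topen (Kset p).

End Defs.

(* In a Hausdorff semitopology a point is intertwined only with itself, so
   I(p) = {p}; quasiregularity of p then says that its interior {p} is
   nonempty, i.e. every singleton is open, and every set is a union of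
   singletons.  Hausdorffness cannot be weakened to T1: on three points, take
   as opens the sets with at least two elements.  Any two of them meet, so
   every point is intertwined with every other one, K(p) is the whole space
   and every point is regular, yet complements of singletons still separate
   points. *)

From Stdlib Require Import Classical FunctionalExtensionality PropExtensionality.

Set Implicit Arguments.

Section OpenSets.
Variables (P : Type) (S : semitopology P).

Lemma opn_eqv (X Y : pset P) :
  opn S X -> (forall x, X x <-> Y x) -> opn S Y.
Proof.
  intros HX HXY.
  replace Y with X; [exact HX|].
  apply functional_extensionality; intro x.
  apply propositional_extensionality, HXY.
Qed.

Lemma interior_open (R : pset P) : opn S (interior S R).
Proof.
  eapply opn_eqv; [exact (opn_union S (fun O => opn S O /\ forall y, O y -> R y)
                    (fun O HO => proj1 HO))|].
  intro x; split.
  - intros [O [[HO HOR] Ox]]; exists O; auto.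
  - intros [O [HO [HOR Ox]]]; exists O; auto.
Qed.

Lemma open_of_open_points :
  (forall p, exists O, opn S O /\ O p /\ forall y, O y -> y = p) ->
  forall X : pset P, opn S X.
Proof.
  intros Hpt X.
  eapply opn_eqv; [exact (interior_open X)|].
  intro x; split.
  - intros [O [_ [HOX Ox]]]; exact (HOX x Ox).
  - intro Xx.
    destruct (Hpt x) as [O [HO [Ox HOx]]].
    exists O; split; [exact HO|split; [|exact Ox]].
    intros y Oy; rewrite (HOx y Oy); exact Xx.
Qed.

Lemma Hausdorff_intertwined_eq :
  Hausdorff S -> forall p q, intertwined S p q -> p = q.
Proof.
  intros HH p q Hpq.
  apply NNPP; intro Hne.
  destruct (HH p q Hne) as [O1 [O2 [H1 [H2 [O1p [O2q Hdisj]]]]]].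
  destruct (Hpq O1 O2 H1 H2 O1p O2q) as [x Hx].
  exact (Hdisj x Hx).
Qed.

Lemma Hausdorff_quasiregular_open_point p :
  Hausdorff S -> quasiregular S p ->
  exists O, opn S O /\ O p /\ forall y, O y -> y = p.
Proof.
  intros HH [z [O [HO [HOI Oz]]]].
  assert (HOp : forall y, O y -> y = p)
    by (intros y Oy; symmetry; exact (Hausdorff_intertwined_eq HH (HOI y Oy))).
  exists O; split; [exact HO|split; [|exact HOp]].
  rewrite <- (HOp z Oz); exact Oz.
Qed.

Lemma regular_of_opens_meet :
  (forall O O' x y, opn S O -> opn S O' -> O x -> O' y ->
     exists z, O z /\ O' z) ->
  forall p, regular S p.
Proof.
  intros Hmeet p.
  assert (HK : forall x, Kset S p x).
  { intro x; exists (fun _ => True).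
    split; [exact (opn_full S)|split; [|exact I]].
    intros y _ O O' HO HO' Op Oy; exact (Hmeet O O' p y HO HO' Op Oy). }
  split; [exact (HK p)|].
  split; [exists p; exact (HK p)|split; [exact (interior_open _)|]].
  intros O O' HO HO' [x [Ox _]] [y [_ O'y]].
  exact (Hmeet O O' x y HO HO' Ox O'y).
Qed.

Lemma quasiregular_of_regular p : regular S p -> quasiregular S p.
Proof. intros [Kp _]; exists p; exact Kp. Qed.

End OpenSets.

Inductive three := A | B | C.

Definition two_pointed (O : pset three) : Prop :=
  exists a b, a <> b /\ O a /\ O b.

Definition opn_three (O : pset three) : Prop :=
  (forall x, ~ O x) \/ two_pointed O.

Lemma opn_three_empty : opn_three (fun _ => False).
Proof. left; auto. Qed.

Lemma opn_three_full : opn_three (fun _ => True).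
Proof. right; exists A, B; repeat split; discriminate. Qed.

Lemma opn_three_union (F : pset three -> Prop) :
  (forall O, F O -> opn_three O) -> opn_three (fun x => exists O, F O /\ O x).
Proof.
  intro HF.
  destruct (classic (exists x O, F O /\ O x)) as [[x [O [FO Ox]]]|Hnone].
  - destruct (HF O FO) as [Hempty|[a [b [Hab [Oa Ob]]]]].
    + exfalso; exact (Hempty x Ox).
    + right; exists a, b; split; [exact Hab|split; exists O; auto].
  - left; intros x [O HO]; apply Hnone; eauto.
Qed.

Definition three_st : semitopology three :=
  {| opn := opn_three; opn_empty := opn_three_empty;
     opn_full := opn_three_full; opn_union := opn_three_union |}.

Lemma two_pointed_meet (O O' : pset three) :
  two_pointed O -> two_pointed O' -> exists x, O x /\ O' x.
Proof.
  intros [a [b [Hab [Oa Ob]]]] [c [d [Hcd [O'c O'd]]]].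
  destruct a, b, c, d; try congruence;
    first [exists A; split; assumption | exists B; split; assumption
          | exists C; split; assumption].
Qed.

Lemma three_st_opens_meet (O O' : pset three) x y :
  opn three_st O -> opn three_st O' -> O x -> O' y -> exists z, O z /\ O' z.
Proof.
  intros [HO|HO] [HO'|HO'] Ox O'y;
    try solve [exfalso; first [exact (HO x Ox) | exact (HO' y O'y)]].
  exact (two_pointed_meet HO HO').
Qed.

Lemma opn_three_co_point p : opn three_st (fun x => x <> p).
Proof.
  right; destruct p; [exists B, C|exists A, C|exists A, B];
    repeat split; discriminate.
Qed.

Lemma three_st_T1 : T1 three_st.
Proof.
  intros p1 p2 Hne.
  exists (fun x => x <> p2), (fun x => x <> p1).
  repeat split; try apply opn_three_co_point; auto.
Qed.

Lemma three_st_point_not_open : ~ opn three_st (fun x => x = A).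
Proof.
  intros [Hempty|[a [b [Hab [Ha Hb]]]]].
  - exact (Hempty A eq_refl).
  - apply Hab; congruence.
Qed.

Theorem lemma4p8 :
  (forall (P : Type) (S : semitopology P),
      Hausdorff S -> (forall p, quasiregular S p) ->
      forall X : pset P, opn S X)
  /\
  (exists (P : Type) (S : semitopology P),
      T1 S /\ (forall p, regular S p) /\ (forall p, quasiregular S p) /\
      exists X : pset P, ~ opn S X).
Proof.
  split.
  - intros P S HH HQ.
    apply open_of_open_points; intro p.
    exact (Hausdorff_quasiregular_open_point HH (HQ p)).
  - pose proof (regular_of_opens_meet three_st three_st_opens_meet) as Hreg.
    exists three, three_st.
    split; [exact three_st_T1|].
    split; [exact Hreg|].
    split; [intro p; exact (quasiregular_of_regular (Hreg p))|].
    exists (fun x => x = A); exact three_st_point_not_open.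
Qed.
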